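(* For every positive integer $n$, $$\sum_{j=1}^{n}\csc^4\left(\frac{(2j-1)\pi}{4n+2}\right) = \frac{8(n+1)n(n^2+n+1)}{3}.$$ *)

From Stdlib Require Import Reals.
Open Scope R_scope.

Definition csc (x : R) : R := / sin x.

From Stdlib Require Import Reals Lra.
From mathcomp Require Import all_boot all_order all_algebra ring zify.
From mathcomp Require Import Rstruct.
Import Order.TTheory GRing.Theory Num.Theory.

(* Put s = sin^2 x.  The identity cos(A + 2x) + cos(A - 2x) = 2 (1 - 2 s) cos A
   shows that cos((2k+1)x) = cos x * P_k(s) for polynomials P_k of degree k with
   P_k(0) = 1, defined by P_{k+2} = (2 - 4X) P_{k+1} - P_k.  The n numbers
   s_j = sin^2((2j+1) pi / (4n+2)), j < n, are distinct nonzero roots of P_n, so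
   P_n = prod_j (1 - X / s_j), and sum_j s_j^-2 = c_1^2 - 2 c_2 for the
   coefficients c_i of P_n.  The recurrence gives c_1 = -2n(n+1) and
   3 c_2 = 2(n-1)n(n+1)(n+2). *)

Local Open Scope ring_scope.

Section LinearFactors.
Variable R : comNzRingType.

Lemma coef_CsubZXM (c d : R) (p : {poly R}) i :
  ((c%:P - d *: 'X) * p)`_i = c * p`_i - (if i is j.+1 then d * p`_j else 0).
Proof.
by rewrite mulrBl -scalerAl coefB coefCM coefZ coefXM; case: i => [|i]; rewrite /= ?mulr0.
Qed.

Lemma size_CsubZXM_leq (c d : R) (p : {poly R}) :
  (size ((c%:P - d *: 'X) * p)%R <= (size p).+1)%N.
Proof.
apply/leq_sizeP => -[|j] // hj.
by rewrite coef_CsubZXM !nth_default ?mulr0 ?subr0 // ltnW.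
Qed.

Variables (I : Type) (f : I -> R).

Lemma coef0_prod_1subZX (s : seq I) : (\prod_(i <- s) (1 - f i *: 'X))`_0 = 1.
Proof.
by rewrite coef0_prod big1 // => i _; rewrite coefB coef1 coefZ coefX mulr0 subr0.
Qed.

Lemma size_prod_1subZX_leq (s : seq I) :
  (size (\prod_(i <- s) (1 - f i *: 'X))%R <= (size s).+1)%N.
Proof.
elim: s => [|i s IH]; first by rewrite big_nil size_poly1.
by rewrite big_cons -polyC1 (leq_trans (size_CsubZXM_leq _ _ _)).
Qed.

Lemma power_sum2_prod_1subZX (s : seq I) :
  let q := \prod_(i <- s) (1 - f i *: 'X) in
  q`_1 ^+ 2 - q`_2 *+ 2 = \sum_(i <- s) f i ^+ 2.
Proof.
elim: s => [|i s IH] /=; first by rewrite !big_nil !coef1 /=; ring.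
rewrite !big_cons -polyC1 !coef_CsubZXM coef0_prod_1subZX -IH; ring.
Qed.

End LinearFactors.

Section ReciprocalRoots.
Variable F : fieldType.

Variables (p : {poly F}) (s : seq F).
Hypotheses (s_uniq : uniq s) (s_neq0 : 0 \notin s) (s_roots : all (root p) s).
Hypotheses (size_p : (size p <= (size s).+1)%N) (p0 : p`_0 = 1).

Lemma eq_prod_1subZX_roots : p = \prod_(r <- s) (1 - r^-1 *: 'X).
Proof.
set q := \prod_(r <- s) _; apply/eqP; rewrite -subr_eq0; apply/negPn/negP => pq_neq0.
have q_roots : all (root q) s.
  apply/allP => r rs; rewrite rootE horner_prod prodf_seq_eq0; apply/hasP.
  exists r; rewrite ?rs //= !hornerE mulVf ?subrr //.
  by apply: contraNneq s_neq0 => <-.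
have pq_roots : all (root (p - q)) (0 :: s).
  rewrite /= rootE horner_coef0 coefB p0 coef0_prod_1subZX subrr eqxx /=.
  apply/allP => r rs; rewrite rootE hornerD hornerN.
  by rewrite (rootP (allP s_roots r rs)) (rootP (allP q_roots r rs)) subrr.
have := max_poly_roots pq_neq0 pq_roots; rewrite /= s_neq0 s_uniq => /(_ isT).
apply/negP; rewrite -leqNgt (leq_trans (size_polyD _ _)) // size_polyN geq_max size_p.
exact: size_prod_1subZX_leq.
Qed.

Lemma sum_sqr_invr_roots : \sum_(r <- s) r ^- 2 = p`_1 ^+ 2 - p`_2 *+ 2.
Proof.
rewrite eq_prod_1subZX_roots power_sum2_prod_1subZX.
by apply: eq_bigr => r _; rewrite exprVn.
Qed.

End ReciprocalRoots.

Section CosOddPoly.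
Variable R : comNzRingType.

Fixpoint cos_odd_poly (k : nat) : {poly R} :=
  match k with
  | 0 => 1
  | 1 => 1 - 4 *: 'X
  | (k.+1 as k1).+1 => (2%:P - 4 *: 'X) * cos_odd_poly k1 - cos_odd_poly k
  end.

Lemma cos_odd_polySS k :
  cos_odd_poly k.+2 = (2%:P - 4 *: 'X) * cos_odd_poly k.+1 - cos_odd_poly k.
Proof. by []. Qed.

Lemma horner_cos_odd_polySS k x : (cos_odd_poly k.+2).[x] =
  (2 - 4 * x) * (cos_odd_poly k.+1).[x] - (cos_odd_poly k).[x].
Proof. by rewrite cos_odd_polySS !hornerE. Qed.

Lemma coef_cos_odd_polySS k i : (cos_odd_poly k.+2)`_i =
  2 * (cos_odd_poly k.+1)`_i - (if i is j.+1 then 4 * (cos_odd_poly k.+1)`_j else 0)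
  - (cos_odd_poly k)`_i.
Proof. by rewrite cos_odd_polySS coefB coef_CsubZXM. Qed.

Lemma size_cos_odd_poly k : (size (cos_odd_poly k) <= k.+1)%N.
Proof.
elim/ltn_ind: k => -[|[|k]] IH; first by rewrite size_poly1.
  by have := size_CsubZXM_leq R 1 4 1; rewrite polyC1 mulr1 size_poly1.
rewrite cos_odd_polySS (leq_trans (size_polyD _ _)) // size_polyN geq_max.
rewrite (leq_trans (size_CsubZXM_leq _ _ _ _)) ?ltnS ?IH //=.
by apply: leq_trans (IH k _) _; lia.
Qed.

Lemma coef0_cos_odd_poly k : (cos_odd_poly k)`_0 = 1.
Proof.
elim/ltn_ind: k => -[|[|k]] IH; first by rewrite coef1.
  by rewrite coefB coef1 coefZ coefX mulr0 subr0.
by rewrite coef_cos_odd_polySS !IH //; ring.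
Qed.

Lemma coef1_cos_odd_poly k : (cos_odd_poly k)`_1 = - 2 * k%:R * k.+1%:R.
Proof.
elim/ltn_ind: k => -[|[|k]] IH; first by rewrite coef1 /=; ring.
  by rewrite coefB coef1 coefZ coefX /=; ring.
by rewrite coef_cos_odd_polySS !IH // coef0_cos_odd_poly; ring.
Qed.

Lemma coef2_cos_odd_poly k :
  3 * (cos_odd_poly k)`_2 = 2 * (k%:R - 1) * k%:R * k.+1%:R * k.+2%:R.
Proof.
elim/ltn_ind: k => -[|[|k]] IH; first by rewrite coef1 /=; ring.
  by rewrite coefB coef1 coefZ coefX /=; ring.
have -> : 3 * (cos_odd_poly k.+2)`_2 = 2 * (3 * (cos_odd_poly k.+1)`_2)
    - 12 * (cos_odd_poly k.+1)`_1 - 3 * (cos_odd_poly k)`_2.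
  by rewrite coef_cos_odd_polySS; ring.
by rewrite !IH // coef1_cos_odd_poly; ring.
Qed.

End CosOddPoly.

Lemma power_sum2_coef_cos_odd_poly (F : numFieldType) n :
  let p := cos_odd_poly F n in
  p`_1 ^+ 2 - p`_2 *+ 2 = 8 * (n%:R + 1) * n%:R * (n%:R ^+ 2 + n%:R + 1) / 3.
Proof.
have nz3 : (3 : F) != 0 by rewrite pnatr_eq0.
rewrite /= -[(cos_odd_poly F n)`_2](mulKf nz3) coef2_cos_odd_poly coef1_cos_odd_poly.
by field.
Qed.

Section OddAngles.
Local Open Scope R_scope.

Lemma cos_odd_poly_sin2 k x :
  cos x * horner (cos_odd_poly R k) (sin x ^+ 2) = cos ((2 * INR k + 1) * x).
Proof.
set s := (sin x ^+ 2)%R.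
(* The MathComp numeral [4%:R] is not convertible to the Stdlib literal [4]. *)
have nat4 : (4%:R%R : R) = 4 by rewrite -INRE /=; lra.
have s2 : s = sin x * sin x by rewrite /s -RpowE /=; lra.
have cos2x := cos_2a_sin x.
elim/ltn_ind: k => -[|[|k]] IH.
- replace ((2 * INR 0 + 1) * x) with x by (simpl; lra).
  by rewrite hornerE Rmult_1_r.
- have -> : horner (cos_odd_poly R 1) s = 1 - 4 * s by rewrite /= !hornerE nat4.
  replace ((2 * INR 1 + 1) * x) with (2 * x + x) by (simpl; lra).
  rewrite cos_plus sin_2a cos2x s2; lra.
- have -> : horner (cos_odd_poly R k.+2) s = (2 - 4 * s) * horner (cos_odd_poly R k.+1) s
                                            - horner (cos_odd_poly R k) s.
    by rewrite horner_cos_odd_polySS nat4.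
  transitivity ((2 - 4 * s) * (cos x * horner (cos_odd_poly R k.+1) s)
                - cos x * horner (cos_odd_poly R k) s); first lra.
  rewrite (IH k.+1) // (IH k); last by apply: ltnW.
  rewrite !S_INR; set A := (2 * (INR k + 1) + 1) * x.
  replace ((2 * (INR k + 1 + 1) + 1) * x) with (A + 2 * x) by (rewrite /A; lra).
  replace ((2 * INR k + 1) * x) with (A - 2 * x) by (rewrite /A; lra).
  rewrite cos_plus cos_minus cos2x s2; lra.
Qed.

Definition odd_angle (n k : nat) : R := (2 * INR k + 1) * (PI / (4 * INR n + 2)).

Lemma odd_angleE n k :
  (2 * INR (k + 1) - 1) * PI / (4 * INR n + 2) = odd_angle n k.
Proof. by rewrite /odd_angle Rmult_div_assoc plus_INR /=; congr (_ * _ / _); lra. Qed.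

Lemma odd_angle_step_gt0 n : 0 < PI / (4 * INR n + 2).
Proof. by apply: Rdiv_lt_0_compat; [exact: PI_RGT_0 | have := pos_INR n; lra]. Qed.

Lemma odd_angle_step_half_PI n : (2 * INR n + 1) * (PI / (4 * INR n + 2)) = PI / 2.
Proof.
have n_ge0 := pos_INR n.
rewrite Rmult_div_assoc (_ : 4 * INR n + 2 = 2 * (2 * INR n + 1)); last by lra.
by apply: Rdiv_mult_l_r; lra.
Qed.

Lemma odd_angle_gt0 n k : 0 < odd_angle n k.
Proof. by have := odd_angle_step_gt0 n; have := pos_INR k; rewrite /odd_angle; nra. Qed.

Lemma odd_angle_lt n j k : (j < k)%N -> odd_angle n j < odd_angle n k.
Proof.
move=> /ssrnat.ltP/lt_INR jk; have := odd_angle_step_gt0 n.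
by rewrite /odd_angle; nra.
Qed.

Lemma odd_angle_lt_half_PI n k : (k < n)%N -> odd_angle n k < PI / 2.
Proof.
move=> /ssrnat.ltP/lt_INR kn; have := odd_angle_step_gt0 n.
by rewrite -(odd_angle_step_half_PI n) /odd_angle; nra.
Qed.

Lemma cos_odd_angle n k : cos ((2 * INR n + 1) * odd_angle n k) = 0.
Proof.
apply: cos_eq_0_1; exists (Z.of_nat k); rewrite -INR_IZR_INZ.
transitivity ((2 * INR k + 1) * ((2 * INR n + 1) * (PI / (4 * INR n + 2)))).
  by rewrite /odd_angle; lra.
by rewrite odd_angle_step_half_PI; lra.
Qed.

Lemma sin_odd_angle_gt0 n k : (k < n)%N -> 0 < sin (odd_angle n k).
Proof.
move=> kn; have := odd_angle_lt_half_PI _ _ kn; have := odd_angle_gt0 n k.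
have := PI_RGT_0; move=> *; apply: sin_gt_0; lra.
Qed.

Lemma sqr_sin_odd_angle_lt n j k :
  (j < k)%N -> (k < n)%N -> sin (odd_angle n j) ^ 2 < sin (odd_angle n k) ^ 2.
Proof.
move=> jk kn; have := odd_angle_lt n _ _ jk; have := odd_angle_lt_half_PI _ _ kn.
have := odd_angle_gt0 n j; have := sin_odd_angle_gt0 _ _ (ltn_trans jk kn).
move=> *; have : sin (odd_angle n j) < sin (odd_angle n k) by apply: sin_increasing_1; lra.
by nra.
Qed.

Lemma root_cos_odd_poly_odd_angle n k :
  (k < n)%N -> root (cos_odd_poly R n) (sin (odd_angle n k) ^+ 2).
Proof.
move=> kn; have := odd_angle_lt_half_PI _ _ kn; have := odd_angle_gt0 n k; have := PI_RGT_0.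
move=> *; have cos_gt0 : 0 < cos (odd_angle n k) by apply: cos_gt_0; lra.
have := cos_odd_poly_sin2 n (odd_angle n k); rewrite cos_odd_angle => /Rmult_integral.
by case=> [|/eqP //]; lra.
Qed.

End OddAngles.

Lemma sum_sin_odd_angle_expN4 n : \sum_(0 <= k < n) (sin (odd_angle n k))^-1 ^+ 4 =
  8 * (n%:R + 1) * n%:R * (n%:R ^+ 2 + n%:R + 1) / 3.
Proof.
pose s := [seq sin (odd_angle n k) ^+ 2 | k <- iota 0 n].
have s_uniq : uniq s.
  rewrite map_inj_in_uniq ?iota_uniq // => j k; rewrite !mem_iota !add0n.
  move=> /andP[_ jn] /andP[_ kn] /eqP; case: (ltngtP j k) => // [jk|kj].
    by have := sqr_sin_odd_angle_lt _ _ _ jk kn; rewrite !RpowE => /RltP/lt_eqF ->.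
  by have := sqr_sin_odd_angle_lt _ _ _ kj jn; rewrite !RpowE => /RltP/gt_eqF ->.
have s_neq0 : 0 \notin s.
  apply/mapP => -[k]; rewrite mem_iota add0n => /andP[_ kn] /eqP.
  by rewrite eq_sym expf_eq0 /= gt_eqF //; apply/RltP/sin_odd_angle_gt0.
have s_roots : all (root (cos_odd_poly R n)) s.
  apply/allP => r /mapP[k]; rewrite mem_iota add0n => /andP[_ kn] ->.
  exact: root_cos_odd_poly_odd_angle.
rewrite -power_sum2_coef_cos_odd_poly -(@sum_sqr_invr_roots _ _ _ s_uniq s_neq0 s_roots).
- rewrite big_map /index_iota subn0; apply: eq_bigr => k _.
  by rewrite -!exprVn -exprM.
- by rewrite size_map size_iota size_cos_odd_poly.
- exact: coef0_cos_odd_poly.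
Qed.

Local Open Scope R_scope.

Theorem mainTheorem19 (n : nat) (hn : Peano.le 1 n) :
  sum_f_R0 (fun k => pow (csc ((2 * INR (k + 1) - 1) * PI / (4 * INR n + 2))) 4) (n - 1)
  = 8 * (INR n + 1) * INR n * (pow (INR n) 2 + INR n + 1) / 3.
Proof.
rewrite sum_f_R0E subn1 prednK; last exact/ssrnat.leP.
transitivity (\sum_(0 <= k < n) (sin (odd_angle n k))^-1 ^+ 4)%R.
  by apply: eq_bigr => k _; rewrite RpowE odd_angleE.
by rewrite sum_sin_odd_angle_expN4 !RealsE.
Qed.
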